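(* Let $F$ be the $\mathbb{C}$-linear anti-automorphism of $\mathcal{A}_0$ determined by $F(xy)=F(y)F(x)$, $F(a)=a$, $F(b)=-b$, $F(1)=1$. Then $F$ extends to a continuous anti-automorphism $F_{conv}$ of $\tilde{\mathcal{A}}_{conv.}$ given by $F_{conv}(a^pb^q)=(-1)^qb^qa^p$.
   Context: $\mathcal{A}_0$ is the $\mathbb{C}$-algebra of polynomials in $a,b$ subject to $ab-ba=b^2$. $\tilde{\mathcal{A}}_{conv.}$ is the algebra of formal series $\sum\gamma_{p,q}a^pb^q$ (product extending that of $\mathcal{A}_0$) such that $|\gamma_{p,q}|\le C_RR^{p+q}q!$ for some $R>1$, $C_R>0$; it can equivalently be described as the series $\sum\delta_{p,q}b^qa^p$ with $|\delta_{p,q}|\le D_RR^{p+q}q!$. It carries its natural inductive limit topology defined by these bounds. *)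

From HB Require Import structures.
From mathcomp Require Import all_boot all_order all_algebra.
From mathcomp Require Import reals.
From mathcomp Require Import complex.
Set Implicit Arguments. Unset Strict Implicit. Unset Printing Implicit Defensive.
Import Order.TTheory GRing.Theory Num.Theory.
Local Open Scope ring_scope.
Local Open Scope complex_scope.

Section Defs.
Variable R : realType.
Local Notation C := R[i].

(* A formal series  sum_{p,q} x p q a^p b^q  is represented by its family of
   coefficients in the basis a^p b^q (PBW basis of A_0, a on the left). *)
Definition series := nat -> nat -> C.

(* Normal-ordering coefficients of A_0 (relation a b - b a = b^2):
     b^q a^r = sum_{k <= r} comm_coef q r k  a^(r-k) b^(q+k),
   comm_coef q r k = (-1)^k binom(r,k) q(q+1)...(q+k-1).
   (Derived from b^q a = a b^q - q b^(q+1).) *)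
Definition comm_coef (q r k : nat) : C :=
  (-1) ^+ k * ('C(r, k))%:R * (\prod_(i < k) (q + i)%:R).

(* Product of two formal series (extending the product of A_0):
   a^p b^q . a^r b^s = sum_k comm_coef q r k a^(p+r-k) b^(q+k+s). *)
Definition smul (x y : series) : series := fun i j =>
  \sum_(p < i.+1) \sum_(k < j.+1) \sum_(q < (j - k).+1)
     x p q * y (i - p + k)%N (j - k - q)%N * comm_coef q (i - p + k) k.

Definition sadd (x y : series) : series := fun p q => x p q + y p q.
Definition sscale (l : C) (x : series) : series := fun p q => l * x p q.
Definition sopp (x : series) : series := fun p q => - x p q.

Definition mono (p q : nat) : series :=
  fun i j => if (i == p) && (j == q) then 1 else 0.
Definition sone := mono 0 0.
Definition sa := mono 1 0.
Definition sb := mono 0 1.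

(* Conversion of a series  sum_{p,q} d p q b^q a^p  (b on the left)
   into the a-left basis: coefficient of a^i b^j is
   sum_{k <= j} d (i+k) (j-k) comm_coef (j-k) (i+k) k  (finite sum). *)
Definition of_ba (d : series) : series := fun i j =>
  \sum_(k < j.+1) d (i + k)%N (j - k)%N * comm_coef (j - k) (i + k) k.

Definition conv (x : series) : Prop :=
  exists (r c : R), 1 < r /\ 0 < c /\
    forall p q, `|x p q| <= (c * r ^+ (p + q) * (q`!)%:R)%:C.

(* The "ball" of radius eps in the Banach step E_r of the inductive limit. *)
Definition ball_r (r eps : R) (x : series) : Prop :=
  forall p q, `|x p q| <= (eps * r ^+ (p + q) * (q`!)%:R)%:C.

(* Zero-neighbourhoods of the locally convex inductive limit topology
   on \tilde A_conv = ind lim_{r > 1} E_r: absolutely convex subsets of the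
   space whose trace on every step E_r is a zero-neighbourhood of E_r. *)
Definition nbhd0 (U : series -> Prop) : Prop :=
  (forall x, U x -> conv x) /\
  (forall x y (l m : C), U x -> U y -> `|l| + `|m| <= 1 ->
      U (sadd (sscale l x) (sscale m y))) /\
  (forall r, 1 < r -> exists eps, 0 < eps /\
      forall x, ball_r r eps x -> U x).

(* Continuity (at 0, equivalently everywhere) of a linear map of
   \tilde A_conv for the inductive limit topology. *)
Definition lc_continuous (T : series -> series) : Prop :=
  forall V, nbhd0 V -> exists U, nbhd0 U /\ forall x, U x -> V (T x).

Definition Fconv (x : series) : series :=
  of_ba (fun p q => (-1) ^+ q * x p q).

End Defs.

From Pilot Require Import Defs.
From HB Require Import structures.
From mathcomp Require Import all_boot all_order all_algebra.
From mathcomp Require Import boolp reals complex functions.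
From mathcomp Require Import zify ring lra.
Set Implicit Arguments. Unset Strict Implicit. Unset Printing Implicit Defensive.
Import Order.TTheory GRing.Theory Num.Theory.
Local Open Scope ring_scope.

(* Right multiplication by a and by b are linear operators R_a, R_b on formal
   series with R_a R_b = R_b R_a - R_b^2, and z a^r b^s = R_b^s R_a^r z.
   Normal ordering of words in two operators subject to this relation (or to
   its mirror image) is governed by comm_coef; this turns F (F m) = m and
   F (m m') = F m' F m for monomials m, m' into operator identities.  All maps
   involved are linear and triangular: the coefficient of a^i b^j only depends
   on the coefficients of a^p b^q with p + q <= i + j and q <= j, so these
   identities extend from monomials to all formal series.  Continuity follows
   from (j - k)! |comm_coef (j - k) (i + k) k| <= 2^(i + j) j!, which maps the
   step E_r of the inductive limit into E_(4r). *)

Section IterLinear.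
Variables (K : pzRingType) (V : lmodType K) (f : {linear V -> V}) (n : nat).

Lemma iter_is_linear : linear (iter n f).
Proof. by elim: n => [|m IH] a u v //=; rewrite IH linearP. Qed.

HB.instance Definition _ :=
  GRing.isLinear.Build K V V *:%R (iter n f) iter_is_linear.

End IterLinear.

Section CommCoef.
Variable R : realType.
Local Notation cf := (@Defs.comm_coef R).

Lemma comm_coef0 q r : cf q r 0 = 1.
Proof. by rewrite /Defs.comm_coef expr0 bin0 big_ord0 !mul1r. Qed.

Lemma comm_coef_small q r k : (r < k)%N -> cf q r k = 0.
Proof. by move=> lt_rk; rewrite /Defs.comm_coef bin_small // mulr0 mul0r. Qed.

Lemma comm_coef0S r k : cf 0 r k.+1 = 0.
Proof. by rewrite /Defs.comm_coef big_ord_recl /= addn0 mul0r mulr0. Qed.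

Lemma comm_coefSS q r k : cf q r.+1 k.+1 = cf q r k.+1 - (q + k)%:R * cf q r k.
Proof.
rewrite /Defs.comm_coef binS natrD big_ord_recr /= exprS.
set P := \prod_(i < k) _; ring.
Qed.

Lemma norm_comm_coef q r k : `|cf q r k| = ('C(r, k) * \prod_(t < k) (q + t))%:R.
Proof.
rewrite /Defs.comm_coef !normrM normrX normrN1 expr1n mul1r normr_nat.
by rewrite -natr_prod normr_nat natrM.
Qed.

End CommCoef.

Section NormalOrdering.
Variables (R : realType) (V : lmodType R[i]) (A B : {linear V -> V}).
Local Notation cf := (@Defs.comm_coef R).

Lemma comm_coef_pascal q r (X : nat -> nat -> V) :
  \sum_(k < r.+1) cf q r k *: (X k (r.+1 - k)%N - X k.+1 (r - k)%N *+ (q + k))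
  = \sum_(k < r.+2) cf q r.+1 k *: X k (r.+1 - k)%N.
Proof.
rewrite [RHS]big_ord_recl /= comm_coef0 subn0 scale1r.
under [X in _ = _ + X]eq_bigr => i _.
  rewrite /bump /= add1n subSS comm_coefSS scalerBl -[(_%:R * _) *: _]scalerA scaler_nat.
  over.
rewrite sumrB.
under eq_bigr => i _ do rewrite scalerBr.
rewrite sumrB big_ord_recl /= comm_coef0 subn0 scale1r -addrA; congr (_ + _).
rewrite [X in _ = X - _]big_ord_recr /= comm_coef_small // scale0r addr0.
by congr (_ - _); apply: eq_bigr => i _; rewrite scalerMnr.
Qed.

Section AB.
Hypothesis AB : forall z, A (B z) = B (A z) - B (B z).

Lemma A_iterB n z : A (iter n B z) = iter n B (A z) - iter n.+1 B z *+ n.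
Proof.
elim: n => [|n IH]; first by rewrite subr0.
by rewrite [iter n.+1 B z]/= AB IH linearB linearMn /= mulrSr opprD addrA.
Qed.

Lemma iterA_iterB r q z : iter r A (iter q B z) =
  \sum_(k < r.+1) cf q r k *: iter (q + k) B (iter (r - k) A z).
Proof.
elim: r => [|r IH]; first by rewrite big_ord1 comm_coef0 scale1r addn0.
rewrite [LHS]/= IH linear_sum
  -(comm_coef_pascal q r (fun k m => iter (q + k) B (iter m A z))).
apply: eq_bigr => [[k lt_kr]] _ /=.
by rewrite linearZ /= A_iterB subSn // addnS.
Qed.

End AB.

Section BA.
Hypothesis BA : forall z, B (A z) = A (B z) + B (B z).

Lemma iterB_A n z : iter n B (A z) = A (iter n B z) + iter n.+1 B z *+ n.
Proof.
elim: n => [|n IH]; first by rewrite mulr0n addr0.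
by rewrite [LHS]/= IH linearD linearMn /= BA mulrSr -addrA [_ + B _]addrC.
Qed.

Lemma iterB_iterA r q z : iter q B (iter r A z) =
  \sum_(k < r.+1) ((-1) ^+ k * cf q r k) *: iter (r - k) A (iter (q + k) B z).
Proof.
elim: r z => [|r IH] z; first by rewrite big_ord1 comm_coef0 mulr1 scale1r addn0.
transitivity (\sum_(k < r.+2)
    cf q r.+1 k *: ((-1) ^+ k *: iter (r.+1 - k) A (iter (q + k) B z))); last first.
  by apply: eq_bigr => k _; rewrite scalerA mulrC.
rewrite iterSr IH
  -(comm_coef_pascal q r (fun k m => (-1) ^+ k *: iter m A (iter (q + k) B z))).
apply: eq_bigr => [[k lt_kr]] _ /=.
rewrite iterB_A linearD linearMn /= -iterSr -subSn // addnS exprS.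
by rewrite mulN1r scaleNr mulNrn opprK !scalerDr !scalerMnr !scalerA [cf q r k * _]mulrC.
Qed.

End BA.
End NormalOrdering.

Section Series.
Variable R : realType.
Local Notation C := R[i].
Local Notation series := (series R).
Local Notation mono := (mono R).
Local Notation cf := (@Defs.comm_coef R).
Local Notation Fconv := (@Defs.Fconv R).
Implicit Types (x y z : series) (T : series -> series).

Lemma seriesP x y : (forall i j, x i j = y i j) -> x = y.
Proof. by move=> eq_xy; apply/funext => i; apply/funext => j; exact: eq_xy. Qed.

Lemma sum_seriesE (I : Type) (s : seq I) (P : pred I) (f : I -> series) i j :
  (\sum_(t <- s | P t) f t) i j = \sum_(t <- s | P t) f t i j.
Proof. by rewrite fct_sumE fct_sumE. Qed.

Lemma scale_seriesE (a : C) x i j : (a *: x) i j = a * x i j.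
Proof. by []. Qed.

Lemma linear_seriesE (a : C) x y i j : (a *: x + y) i j = a * x i j + y i j.
Proof. by []. Qed.

Lemma sub_seriesE x y i j : (x - y) i j = x i j - y i j.
Proof. by []. Qed.

Lemma monoC p q i j : mono p q i j = mono i j p q.
Proof. by rewrite /mono [i == p]eq_sym [j == q]eq_sym. Qed.

Lemma sum_mono_delta n m p q (G : nat -> nat -> C) :
  \sum_(p' < n) \sum_(q' < m) mono p q p' q' * G p' q' =
  if (p < n)%N && (q < m)%N then G p q else 0.
Proof.
transitivity (\sum_(p' < n | p' == p :> nat) \sum_(q' < m | q' == q :> nat) G p' q').
  rewrite [RHS]big_mkcond; apply: eq_bigr => p' _ /=; rewrite /mono.
  case: eqP => [_|_]; last by rewrite big1 // => q' _; rewrite mul0r.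
  by rewrite [RHS]big_mkcond; apply: eq_bigr => q' _ /=; case: eqP; rewrite ?mul1r ?mul0r.
rewrite (big_ord1_eq _ (fun p' => \sum_(q' < m | q' == q :> nat) G p' q')).
by rewrite (big_ord1_eq _ (G p)); case: (p < n)%N.
Qed.

Lemma coef_sum_mono n (c : nat -> C) (P Q : nat -> nat) i j :
  (\sum_(k < n) c k *: mono (P k) (Q k)) i j =
  \sum_(k < n | (i == P k) && (j == Q k)) c k.
Proof.
rewrite sum_seriesE [RHS]big_mkcond; apply: eq_bigr => k _ /=.
by rewrite scale_seriesE /mono; case: ifP; rewrite ?mulr1 ?mulr0.
Qed.

Lemma sum_ord_cond_eq n m (P Q : pred nat) (F : nat -> C) :
  (forall k, P k && (k < n)%N = Q k && (k < m)%N) ->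
  \sum_(k < n | P k) F k = \sum_(k < m | Q k) F k.
Proof.
move=> eqPQ; rewrite (big_ord_widen_cond (n + m) P F) ?leq_addr //.
rewrite (big_ord_widen_cond (n + m) Q F) ?leq_addl //.
by apply: eq_bigl => k; rewrite eqPQ.
Qed.

Definition triangular T := forall x y i j,
  (forall p q, (p + q <= i + j)%N -> (q <= j)%N -> x p q = y p q) ->
  T x i j = T y i j.

Lemma triangular_comp T1 T2 :
  triangular T1 -> triangular T2 -> triangular (T1 \o T2).
Proof.
move=> tri1 tri2 x y i j eq_xy /=; apply: tri1 => p q le_pq le_qj.
by apply: tri2 => p' q' le_pq' le_qj'; apply: eq_xy; lia.
Qed.

Lemma triangular_iter n T : triangular T -> triangular (iter n T).
Proof.
move=> triT; elim: n => [|n IH] x y i j eq_xy /=; first by apply: eq_xy; lia.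
exact: (triangular_comp triT IH).
Qed.

Definition trunc n m x : series := \sum_(p < n) \sum_(q < m) x p q *: mono p q.

Lemma trunc_coef n m x i j : (i < n)%N -> (j < m)%N -> trunc n m x i j = x i j.
Proof.
move=> lt_in lt_jm; rewrite /trunc sum_seriesE.
transitivity (\sum_(p < n) \sum_(q < m) mono i j p q * x p q).
  apply: eq_bigr => p _; rewrite sum_seriesE; apply: eq_bigr => q _.
  by rewrite scale_seriesE monoC mulrC.
by rewrite sum_mono_delta lt_in lt_jm.
Qed.

Lemma linear_triangular_eq (T1 T2 : {linear series -> series}) :
  triangular T1 -> triangular T2 ->
  (forall p q, T1 (mono p q) = T2 (mono p q)) -> T1 =1 T2.
Proof.
move=> tri1 tri2 eq_mono x; apply: seriesP => i j.
have agree p q : (p + q <= i + j)%N -> (q <= j)%N ->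
    trunc (i + j).+1 j.+1 x p q = x p q.
  by move=> le_pq le_qj; rewrite trunc_coef //; lia.
rewrite -(tri1 _ _ _ _ agree) -(tri2 _ _ _ _ agree) /trunc !linear_sum.
congr (_ i j); apply: eq_bigr => p _; rewrite !linear_sum.
by apply: eq_bigr => q _; rewrite !linearZ /= eq_mono.
Qed.

(* z a and z b, using a^p b^q a = a^(p+1) b^q - q a^p b^(q+1). *)
Definition rmul_a z : series := fun i j =>
  (if i is i'.+1 then z i' j else 0) - (if j is j'.+1 then j'%:R * z i j' else 0).

Definition rmul_b z : series := fun i j => if j is j'.+1 then z i j' else 0.

Lemma rmul_a_is_linear : linear rmul_a.
Proof.
move=> a u v; apply: seriesP => -[|i] [|j];
  by rewrite !linear_seriesE /rmul_a /= ?linear_seriesE; ring.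
Qed.

HB.instance Definition _ :=
  GRing.isLinear.Build C series series *:%R rmul_a rmul_a_is_linear.

Lemma rmul_b_is_linear : linear rmul_b.
Proof.
move=> a u v; apply: seriesP => i -[|j];
  by rewrite !linear_seriesE /rmul_b /= ?linear_seriesE; ring.
Qed.

HB.instance Definition _ :=
  GRing.isLinear.Build C series series *:%R rmul_b rmul_b_is_linear.

Lemma rmul_ab z : rmul_a (rmul_b z) = rmul_b (rmul_a z) - rmul_b (rmul_b z).
Proof.
by apply: seriesP => -[|i] [|[|j]]; rewrite sub_seriesE /rmul_a /rmul_b /=; ring.
Qed.

Lemma rmul_ba z : rmul_b (rmul_a z) = rmul_a (rmul_b z) + rmul_b (rmul_b z).
Proof. by rewrite rmul_ab subrK. Qed.

Lemma rmul_a_triangular : triangular rmul_a.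
Proof.
by move=> x y [|i] [|j] eq_xy; rewrite /rmul_a //= !eq_xy //; lia.
Qed.

Lemma rmul_b_triangular : triangular rmul_b.
Proof. by move=> x y i [|j] eq_xy //=; rewrite eq_xy //; lia. Qed.

Lemma rmul_a_mono0 m : rmul_a (mono m 0) = mono m.+1 0.
Proof.
by apply: seriesP => -[|i] [|[|j]]; rewrite /rmul_a /mono /= ?andbF ?mul0r ?mulr0 ?subr0.
Qed.

Lemma rmul_b_mono m n : rmul_b (mono m n) = mono m n.+1.
Proof. by apply: seriesP => i [|j]; rewrite /rmul_b /mono //= andbF. Qed.

Lemma mono_iter p q : mono p q = iter q rmul_b (iter p rmul_a (mono 0 0)).
Proof.
have -> : iter p rmul_a (mono 0 0) = mono p 0.
  by elim: p => [|p IH] //=; rewrite IH rmul_a_mono0.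
by elim: q => [|q IH] //=; rewrite -IH rmul_b_mono.
Qed.

Definition smulr y x := smul x y.

Lemma smul_is_linear x : linear (smul x).
Proof.
move=> a u v; apply: seriesP => i j; rewrite linear_seriesE /smul.
rewrite mulr_sumr -big_split; apply: eq_bigr => p _.
rewrite mulr_sumr -big_split; apply: eq_bigr => k _.
rewrite mulr_sumr -big_split; apply: eq_bigr => q _ /=.
by rewrite linear_seriesE; ring.
Qed.

HB.instance Definition _ x :=
  GRing.isLinear.Build C series series *:%R (smul x) (smul_is_linear x).

Lemma smulr_is_linear y : linear (smulr y).
Proof.
move=> a u v; apply: seriesP => i j; rewrite linear_seriesE /smulr /smul.
rewrite mulr_sumr -big_split; apply: eq_bigr => p _.
rewrite mulr_sumr -big_split; apply: eq_bigr => k _.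
rewrite mulr_sumr -big_split; apply: eq_bigr => q _ /=.
by rewrite linear_seriesE; ring.
Qed.

HB.instance Definition _ y :=
  GRing.isLinear.Build C series series *:%R (smulr y) (smulr_is_linear y).

Lemma Fconv_is_linear : linear Fconv.
Proof.
move=> a u v; apply: seriesP => i j; rewrite linear_seriesE /Fconv /of_ba.
rewrite mulr_sumr -big_split; apply: eq_bigr => k _ /=.
by rewrite linear_seriesE; ring.
Qed.

HB.instance Definition _ :=
  GRing.isLinear.Build C series series *:%R Fconv Fconv_is_linear.

Lemma smul_triangular x : triangular (smul x).
Proof.
move=> u v i j eq_uv; apply: eq_bigr => -[p lt_pi] _.
apply: eq_bigr => -[k lt_kj] _; apply: eq_bigr => -[q lt_qk] _ /=.
by rewrite eq_uv //; lia.
Qed.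

Lemma smulr_triangular y : triangular (smulr y).
Proof.
move=> u v i j eq_uv; apply: eq_bigr => -[p lt_pi] _.
apply: eq_bigr => -[k lt_kj] _; apply: eq_bigr => -[q lt_qk] _ /=.
by rewrite eq_uv //; lia.
Qed.

Lemma Fconv_triangular : triangular Fconv.
Proof.
move=> u v i j eq_uv; apply: eq_bigr => -[k lt_kj] _ /=.
by rewrite eq_uv //; lia.
Qed.

Lemma smul_mono_mono p q r s : smul (mono p q) (mono r s) =
  \sum_(k < r.+1) cf q r k *: mono (p + (r - k)) (q + k + s).
Proof.
apply: seriesP => i j.
rewrite (coef_sum_mono _ _ (fun k => p + (r - k))%N (fun k => q + k + s)%N).
rewrite /smul exchange_big /=.
transitivity (\sum_(k < j.+1 | [&& p <= i, q + k + s == j & i - p + k == r]%N) cf q r k).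
  rewrite [RHS]big_mkcond; apply: eq_bigr => -[k lt_kj] _ /=.
  under eq_bigr do under eq_bigr do rewrite -mulrA.
  rewrite (sum_mono_delta _ _ _ _ (fun p' q' =>
    mono r s (i - p' + k)%N (j - k - q')%N * cf q' (i - p' + k)%N k)) !ltnS /mono.
  case: (leqP p i) => //= le_pi; case: (leqP q (j - k)) => le_qjk /=; last first.
    by have -> : (q + k + s == j)%N = false by lia.
  have -> : (i - p + k == r)%N && (j - k - q == s)%N =
            (q + k + s == j)%N && (i - p + k == r)%N.
    by lia.
  by case: ifP => [/andP[_ /eqP->]|_]; rewrite ?mul1r ?mul0r.
apply: (sum_ord_cond_eq
  (P := fun k => [&& p <= i, q + k + s == j & i - p + k == r]%N)
  (Q := fun k => (i == p + (r - k))%N && (j == q + k + s)%N)).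
by move=> k; lia.
Qed.

Lemma Fconv_mono p q :
  Fconv (mono p q) = (-1) ^+ q *: \sum_(k < p.+1) cf q p k *: mono (p - k) (q + k).
Proof.
apply: seriesP => i j.
rewrite scale_seriesE (coef_sum_mono _ _ (fun k => p - k)%N (fun k => q + k)%N).
transitivity ((-1) ^+ q * \sum_(k < j.+1 | (i + k == p)%N && (j - k == q)%N) cf q p k).
  rewrite /Fconv /of_ba mulr_sumr [RHS]big_mkcond; apply: eq_bigr => k _ /=.
  by rewrite /mono; case: ifP => [/andP[/eqP-> /eqP->]|_]; rewrite ?mulr1 ?mulr0 ?mul0r.
congr (_ * _).
apply: (sum_ord_cond_eq (P := fun k => (i + k == p)%N && (j - k == q)%N)
                        (Q := fun k => (i == p - k)%N && (j == q + k)%N)).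
by move=> k; lia.
Qed.

Lemma Fconv_mono_ba p q :
  Fconv (mono p q) = (-1) ^+ q *: smul (mono 0 q) (mono p 0).
Proof.
rewrite Fconv_mono smul_mono_mono; congr (_ *: _).
by apply: eq_bigr => k _; rewrite add0n addn0.
Qed.

Lemma Fconv_mono_iter p q :
  Fconv (mono p q) = (-1) ^+ q *: iter p rmul_a (iter q rmul_b (mono 0 0)).
Proof.
rewrite Fconv_mono (iterA_iterB rmul_ab); congr (_ *: _).
by apply: eq_bigr => k _; rewrite -mono_iter.
Qed.

Lemma smul_mono z r s : smul z (mono r s) = iter s rmul_b (iter r rmul_a z).
Proof.
have tri : triangular (iter s rmul_b \o iter r rmul_a).
  by apply: triangular_comp; apply: triangular_iter;
    [exact: rmul_b_triangular | exact: rmul_a_triangular].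
apply: (linear_triangular_eq (T1 := smulr (mono r s))
          (T2 := iter s rmul_b \o iter r rmul_a) (smulr_triangular _) tri) => p q.
rewrite /= /smulr smul_mono_mono [mono p q]mono_iter (iterA_iterB rmul_ab).
rewrite !linear_sum; apply: eq_bigr => k _; rewrite !linearZ /= -!iterD mono_iter.
by rewrite (addnC (r - k)%N) (addnC s).
Qed.

Lemma Fconv_involutive_mono p q : Fconv (Fconv (mono p q)) = mono p q.
Proof.
rewrite [Fconv (mono p q)]Fconv_mono linearZ linear_sum /= scaler_sumr.
rewrite [RHS]mono_iter (iterB_iterA rmul_ba).
apply: eq_bigr => k _; rewrite linearZ /= Fconv_mono_iter !scalerA exprD.
by rewrite mulrCA mulrA signrMK mulrC.
Qed.

Lemma Fconv_antimul_mono p q r s :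
  Fconv (smul (mono p q) (mono r s)) = smul (Fconv (mono r s)) (Fconv (mono p q)).
Proof.
rewrite smul_mono_mono linear_sum [Fconv (mono p q)]Fconv_mono linearZ linear_sum /=.
under [X in _ = _ *: X]eq_bigr do rewrite linearZ /= smul_mono.
rewrite -(iterA_iterB rmul_ab) Fconv_mono_iter !linearZ /=.
rewrite (iterB_iterA rmul_ba) linear_sum !scaler_sumr.
apply: eq_bigr => k _; rewrite !linearZ /= Fconv_mono_iter !scalerA -!iterD.
by congr (_ *: _); rewrite !exprD; ring.
Qed.

Lemma Fconv_involutive : involutive Fconv.
Proof.
apply: (linear_triangular_eq (T1 := Fconv \o Fconv) (T2 := idfun)).
- exact: triangular_comp Fconv_triangular Fconv_triangular.
- by move=> x y i j eq_xy; apply: eq_xy.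
- exact: Fconv_involutive_mono.
Qed.

Lemma Fconv_antimul x y : Fconv (smul x y) = smul (Fconv y) (Fconv x).
Proof.
have antimul_mono r s u :
    Fconv (smul u (mono r s)) = smul (Fconv (mono r s)) (Fconv u).
  apply: (linear_triangular_eq (T1 := Fconv \o smulr (mono r s))
                               (T2 := smul (Fconv (mono r s)) \o Fconv)).
  - exact: triangular_comp Fconv_triangular (smulr_triangular _).
  - exact: triangular_comp (smul_triangular _) Fconv_triangular.
  - by move=> p q; exact: Fconv_antimul_mono.
apply: (linear_triangular_eq (T1 := Fconv \o smul x)
                             (T2 := smulr (Fconv x) \o Fconv)).
- exact: triangular_comp Fconv_triangular (smul_triangular _).
- exact: triangular_comp (smulr_triangular _) Fconv_triangular.
- by move=> r s; exact: antimul_mono.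
Qed.

End Series.

Lemma fact_rising_le q k : (q`! * \prod_(t < k) (q + t) <= (q + k)`!)%N.
Proof.
elim: k => [|k IH]; first by rewrite big_ord0 muln1 addn0.
rewrite big_ord_recr /= mulnA addnS factS mulnC.
by apply: leq_mul => //; rewrite mulnC.
Qed.

Lemma bin_le_exp2 n k : ('C(n, k) <= 2 ^ n)%N.
Proof.
elim: n k => [|n IH] [|k]; rewrite ?bin0 ?bin0n ?expn_gt0 //.
by rewrite binS expnS mul2n -addnn leq_add.
Qed.

Lemma comm_coef_fact_le i j k : (k <= j)%N ->
  ((j - k)`! * ('C(i + k, k) * \prod_(t < k) (j - k + t)) <= 2 ^ (i + j) * j`!)%N.
Proof.
move=> le_kj; rewrite mulnCA; apply: leq_mul.
  by apply: leq_trans (bin_le_exp2 _ _) _; rewrite leq_exp2l //; lia.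
by have := fact_rising_le (j - k) k; rewrite subnK.
Qed.

Section Growth.
Local Open Scope complex_scope.
Variable R : realType.
Local Notation C := R[i].
Local Notation series := (series R).
Local Notation cf := (@Defs.comm_coef R).
Local Notation Fconv := (@Defs.Fconv R).
Implicit Types (x y : series) (r e : R).

Lemma Fconv_ball r e x :
  0 <= r -> 0 <= e -> ball_r r e x -> ball_r (4 * r) e (Fconv x).
Proof.
move=> r_ge0 e_ge0 xB i j.
set M : C := (e * r ^+ (i + j) * (2 ^ (i + j) * j`!)%:R)%:C.
have term_le (k : 'I_j.+1) :
    `|(-1) ^+ (j - k) * x (i + k)%N (j - k)%N * cf (j - k) (i + k) k| <= M.
  rewrite normrM norm_comm_coef normrM normrX normrN1 expr1n mul1r.
  apply: le_trans (ler_wpM2r (ler0n _ _) (xB _ _)) _.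
  have -> : (i + k + (j - k) = i + j)%N by have := ltn_ord k; lia.
  rewrite -(rmorph_nat (real_complex R)) -rmorphM lecR -!mulrA.
  rewrite ler_wpM2l ?mulr_ge0 ?exprn_ge0 // ler_wpM2l ?exprn_ge0 // -natrM ler_nat.
  by apply: comm_coef_fact_le; rewrite -ltnS.
(* j + 1 terms, and j + 1 <= 2^(i + j): this is where 4 = 2 * 2 comes from. *)
apply: le_trans (ler_norm_sum _ _ _) _.
apply: le_trans (ler_sum _ (fun k _ => term_le k)) _.
rewrite sumr_const card_ord /M -(rmorphMn (real_complex R)) lecR exprMn.
rewrite -mulrA -mulr_natr -!mulrA ler_wpM2l // [X in _ <= X]mulrCA.
rewrite ler_wpM2l ?exprn_ge0 // -natrX -!natrM ler_nat.
have le_j2 : (j.+1 <= 2 ^ (i + j))%N.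
  by apply: leq_trans (ltn_expl j (ltnSn 1)) _; rewrite leq_exp2l //; lia.
rewrite -[4%N]/(2 * 2)%N expnMn.
by rewrite mulnAC -!mulnA leq_mul2l leq_mul2r le_j2 !orbT.
Qed.

Lemma ball_r_widen r r' e x :
  0 <= r -> r <= r' -> 0 <= e -> ball_r r e x -> ball_r r' e x.
Proof.
move=> r_ge0 le_rr' e_ge0 xB p q; apply: le_trans (xB p q) _.
rewrite lecR ler_wpM2r // ler_wpM2l // lerXn2r // nnegrE //.
exact: le_trans le_rr'.
Qed.

Lemma ball_r_lincomb r e e' x y (l m : C) : `|l| <= 1 -> `|m| <= 1 ->
  ball_r r e x -> ball_r r e' y -> ball_r r (e + e') (l *: x + m *: y).
Proof.
move=> l_le1 m_le1 xB yB p q; rewrite linear_seriesE scale_seriesE.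
apply: le_trans (ler_normD _ _) _; rewrite !normrM !mulrDl rmorphD lerD //.
  by apply: le_trans (ler_wpM2r (normr_ge0 _) l_le1) _; rewrite mul1r.
by apply: le_trans (ler_wpM2r (normr_ge0 _) m_le1) _; rewrite mul1r.
Qed.

Lemma conv_lincomb x y (l m : C) : `|l| <= 1 -> `|m| <= 1 ->
  conv x -> conv y -> conv (l *: x + m *: y).
Proof.
move=> l_le1 m_le1 [r [c [r_gt1 [c_gt0 xB]]]] [r' [c' [r'_gt1 [c'_gt0 yB]]]].
exists (Num.max r r'), (c + c'); do 2?split; first by rewrite lt_max r_gt1.
  exact: addr_gt0.
apply: ball_r_lincomb => //.
  by apply: (ball_r_widen _ _ _ xB); rewrite ?le_max ?lexx //; lra.
by apply: (ball_r_widen _ _ _ yB); rewrite ?le_max ?lexx ?orbT //; lra.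
Qed.

Lemma conv_Fconv x : conv x -> conv (Fconv x).
Proof.
move=> [r [c [r_gt1 [c_gt0 xB]]]]; exists (4 * r), c; do 2?split => //; first lra.
by apply: Fconv_ball => //; lra.
Qed.

Lemma Fconv_continuous : lc_continuous Fconv.
Proof.
move=> V [V_conv [V_absconv V_ball]].
exists (fun x => conv x /\ V (Fconv x)); split; last by move=> x [].
split; first by move=> x [].
split.
  move=> x y l m [conv_x Vx] [conv_y Vy] lm_le1.
  have [l_le1 m_le1] : `|l| <= 1 /\ `|m| <= 1.
    by split; apply: le_trans lm_le1; rewrite ?lerDl ?lerDr normr_ge0.
  split; first exact: conv_lincomb.
  by rewrite [Fconv _]linearD !linearZ; exact: V_absconv.
move=> r r_gt1; have [e [e_gt0 eB]] := V_ball (4 * r) ltac:(lra).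
exists e; split => // x xB; split; first by exists r, e.
by apply: eB; apply: Fconv_ball => //; lra.
Qed.

End Growth.

Theorem corollary1p1p4 (R : realType) :
  (* F_conv maps \tilde A_conv into itself *)
  (forall x : series R, conv x -> conv (Fconv x)) /\
  (* C-linearity *)
  (forall (x y : series R), Fconv (sadd x y) = sadd (Fconv x) (Fconv y)) /\
  (forall (l : R[i]) (x : series R), Fconv (sscale l x) = sscale l (Fconv x)) /\
  (* bijectivity on \tilde A_conv *)
  (forall x y : series R, conv x -> conv y -> Fconv x = Fconv y -> x = y) /\
  (forall y : series R, conv y -> exists x, conv x /\ Fconv x = y) /\
  (* anti-multiplicativity *)
  (forall x y : series R, conv x -> conv y ->
     Fconv (smul x y) = smul (Fconv y) (Fconv x)) /\
  (* extends F : F(1) = 1, F(a) = a, F(b) = -b *)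
  Fconv (sone R) = sone R /\ Fconv (sa R) = sa R /\ Fconv (sb R) = sopp (sb R) /\
  (* formula on monomials: F_conv(a^p b^q) = (-1)^q b^q a^p *)
  (forall p q : nat,
     Fconv (mono R p q) = sscale ((-1) ^+ q) (smul (mono R 0 q) (mono R p 0))) /\
  (* continuity for the inductive limit topology *)
  lc_continuous (@Fconv R).
Proof.
split; first exact: conv_Fconv.
split; first by move=> x y; exact: linearD.
split; first by move=> l x; exact: linearZ.
split; first by move=> x y _ _ /(congr1 (@Fconv R)); rewrite !Fconv_involutive.
split; first by move=> y /conv_Fconv conv_Fy; exists (Fconv y); rewrite Fconv_involutive.
split; first by move=> x y _ _; exact: Fconv_antimul.
split; first by rewrite /sone Fconv_mono big_ord1 comm_coef0 expr0 !scale1r.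
split.
  rewrite /sa Fconv_mono big_ord_recr big_ord1 /= comm_coef0 comm_coef0S.
  by rewrite scale0r addr0 expr0 !scale1r.
split; first by rewrite /sb Fconv_mono big_ord1 comm_coef0 expr1 scale1r scaleN1r.
split; first exact: Fconv_mono_ba.
exact: Fconv_continuous.
Qed.
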